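(* Let $(\vec s_i)_{i\in\mathbb N}$ be a strictly increasing sequence of oriented separations of a graph $G$ and $(P_i)_{i\in\mathbb N}$ a sequence of pre-tangles in $G$ satisfying (IM1) $\overleftarrow{s}_i\in P_i$ and $\vec s_i\in P_{i+1}$ for all $i$, and (IM2) for all $i<j$, every separation of minimal order among $s_i,\dots,s_{j-1}$ efficiently distinguishes $P_i$ and $P_j$. If $(|s_i|)_{i}$ cofinitely exceeds every integer, then there is a strictly increasing function $j:\mathbb N\to\mathbb N$ such that $(|s_{j(i)}|)_{i}$ is strictly increasing and the sequences $(\vec s_{j(i)})_{i}$ and $(P_{j(i)})_{i}$ still satisfy (IM1) and (IM2).
   Context: Notation: $s$ denotes a separation (an unordered pair $\{A,B\}$ of subsets of $V(G)$ with $A\cup B=V(G)$ and no edge between $A\setminus B$ and $B\setminus A$; order $|s|=|A\cap B|$), $\vec s,\overleftarrow{s}$ its two orientations; oriented separations are ordered by $(A,B)\le(C,D)$ iff $A\subseteq C$ and $B\supseteq D$. A set $O$ of oriented separations is consistent if there are no $(A,B),(C,D)\in O$ with $\{A,B\}\ne\{C,D\}$ and $(B,A)\le(C,D)$. A pre-tangle is a consistent set $P$ which, for some $k\in\mathbb N\cup\{\aleph_0\}$, contains exactly one orientation of every separation of order $<k$ and nothing else. A separation distinguishes two pre-tangles if both contain an orientation of it but different ones; efficiently if of minimum order among such. A sequence $(a_i)$ of integers cofinitely exceeds every integer if for every $k\in\mathbb N$ there is $I$ with $a_i\ge k$ for all $i\ge I$. *)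

(* Graphs may be infinite: vertex type V arbitrary, vertex
   subsets are predicates V -> Prop (equality of sets is Leibniz equality;
   with functional/propositional extensionality this is extensional). *)
From Stdlib Require Import List Arith.
Import ListNotations.

Set Implicit Arguments.
Section Seps.
Variable V : Type.
Variable adj : V -> V -> Prop.

Definition osep := ((V -> Prop) * (V -> Prop))%type.

Definition inv (s : osep) : osep := (snd s, fst s).

Definition is_sep (s : osep) : Prop :=
  (forall v, fst s v \/ snd s v) /\
  (forall x y, fst s x -> ~ snd s x -> snd s y -> ~ fst s y ->
     ~ adj x y /\ ~ adj y x).

Definition order_eq (s : osep) (n : nat) : Prop :=
  exists l : list V, NoDup l /\ length l = n /\
    (forall v, (fst s v /\ snd s v) <-> In v l).

Definition ole (r t : osep) : Prop :=
  (forall v, fst r v -> fst t v) /\ (forall v, snd t v -> snd r v).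

Definition olt (r t : osep) : Prop := ole r t /\ r <> t.

Definition same_sep (r t : osep) : Prop := t = r \/ t = inv r.

Definition consistent (O : osep -> Prop) : Prop :=
  ~ exists r t, O r /\ O t /\ ~ same_sep r t /\ ole (inv r) t.

(* order < k, where k : option nat, None standing for aleph_0 *)
Definition order_lt (s : osep) (k : option nat) : Prop :=
  match k with
  | Some k => exists n, order_eq s n /\ n < k
  | None => exists n, order_eq s n
  end.

Definition pretangle (P : osep -> Prop) : Prop :=
  consistent P /\
  exists k : option nat,
    (forall r, P r -> is_sep r /\ order_lt r k) /\
    (forall s, is_sep s -> order_lt s k ->
       (P s \/ P (inv s)) /\ (s <> inv s -> ~ (P s /\ P (inv s)))).

Definition distinguishes (P Q : osep -> Prop) (s : osep) : Prop :=
  s <> inv s /\ ((P s /\ Q (inv s)) \/ (P (inv s) /\ Q s)).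

Definition eff_distinguishes (P Q : osep -> Prop) (s : osep) : Prop :=
  distinguishes P Q s /\
  exists n, order_eq s n /\
    forall t m, distinguishes P Q t -> order_eq t m -> n <= m.

Definition IM1 (s : nat -> osep) (P : nat -> osep -> Prop) : Prop :=
  forall i, P i (inv (s i)) /\ P (S i) (s i).

Definition IM2 (s : nat -> osep) (P : nat -> osep -> Prop) : Prop :=
  forall i j l, i <= l < j ->
    (forall l' n n', i <= l' < j -> order_eq (s l) n -> order_eq (s l') n' ->
        n <= n') ->
    eff_distinguishes (P i) (P j) (s l).

Definition cofinitely_exceeds (s : nat -> osep) : Prop :=
  forall k : nat, exists I, forall i, I <= i ->
    exists n, order_eq (s i) n /\ k <= n.

End Seps.

From Stdlib Require Import List Arith Lia Classical ClassicalEpsilon.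

Set Implicit Arguments.

(* Call [k] a suffix minimum if [|s_k|] is strictly smaller than every later
   order [|s_l|], [l > k].  Since the orders tend to infinity, suffix minima
   occur arbitrarily late; take [j] to enumerate them.  Between [j a] and
   [j b] the unique separation of minimal order is then [s_(j a)], so (IM2)
   for the subsequence is an instance of (IM2), and the second half of (IM1)
   follows because [P_(j a)] already contains the inverse of [s_(j a)]. *)

Section SuffixMinima.

Variable f : nat -> nat.

Definition suffix_strict_min (k : nat) : Prop := forall l, k < l -> f k < f l.

Lemma suffix_strict_min_before (b I : nat) :
  (forall i, I <= i -> b < f i) ->
  forall N, f N <= b -> exists k, N <= k /\ suffix_strict_min k.
Proof.
  intros Hb N.
  (* A non-minimal [N] is followed by some [k] with [f k <= f N <= b], so [k < I]. *)
  induction N as [N IH] using (well_founded_induction (well_founded_ltof _ (fun N => I - N))).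
  intros HN.
  destruct (classic (suffix_strict_min N)) as [Hmin | Hnot]; [now exists N |].
  apply not_all_ex_not in Hnot as [k Hk].
  apply imply_to_and in Hk as [HNk Hfk].
  assert (HkI : k < I).
  { destruct (Nat.lt_ge_cases k I) as [|HIk]; [easy |].
    specialize (Hb k HIk); lia. }
  destruct (IH k) as [m [Hkm Hm]]; unfold ltof; [lia | lia |].
  exists m; split; [lia | exact Hm].
Qed.

Lemma suffix_strict_min_unbounded :
  (forall b, exists I, forall i, I <= i -> b < f i) ->
  forall N, exists k, N <= k /\ suffix_strict_min k.
Proof.
  intros Hf N.
  destruct (Hf (f N)) as [I HI].
  exact (suffix_strict_min_before HI (le_n _)).
Qed.

End SuffixMinima.

Lemma increasing_enumeration (Q : nat -> Prop) :
  (forall N, exists k, N <= k /\ Q k) ->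
  exists j : nat -> nat, (forall a b, a < b -> j a < j b) /\ (forall a, Q (j a)).
Proof.
  intros HQ.
  destruct (choice (fun N k => N <= k /\ Q k) HQ) as [g Hg].
  set (j := fix j a := match a with 0 => g 0 | S a => g (S (j a)) end).
  assert (j_step : forall a, j a < j (S a)) by (intros a; exact (proj1 (Hg (S (j a))))).
  exists j; split.
  - intros a b Hab; induction Hab as [| b _ IH]; [apply j_step | specialize (j_step b); lia].
  - intros [| a]; apply Hg.
Qed.

Section Separations.

Variables (V : Type) (adj : V -> V -> Prop).

Lemma order_eq_unique (r : osep V) (n m : nat) :
  order_eq r n -> order_eq r m -> n = m.
Proof.
  intros [l1 [N1 [L1 H1]]] [l2 [N2 [L2 H2]]].
  assert (length l1 <= length l2).
  { apply NoDup_incl_length; auto. intros v Hv. apply H2, H1, Hv. }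
  assert (length l2 <= length l1).
  { apply NoDup_incl_length; auto. intros v Hv. apply H1, H2, Hv. }
  lia.
Qed.

Lemma pretangle_mem_order (P : osep V -> Prop) (r : osep V) :
  pretangle adj P -> P r -> exists n, order_eq r n.
Proof.
  intros [_ [[k|] [Hmem _]]] Hr; destruct (Hmem r Hr) as [_ Ho].
  - destruct Ho as [n [Hn _]]; eauto.
  - exact Ho.
Qed.

Lemma pretangle_not_inv (P : osep V -> Prop) (r : osep V) :
  pretangle adj P -> P r -> r <> inv r -> ~ P (inv r).
Proof.
  intros [_ [k [Hmem Hall]]] Hr Hneq Hinv.
  destruct (Hmem r Hr) as [Hsep Ho].
  exact (proj2 (Hall r Hsep Ho) Hneq (conj Hr Hinv)).
Qed.

Lemma distinguishes_from_inv (P Q : osep V -> Prop) (r : osep V) :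
  pretangle adj P -> P (inv r) -> distinguishes P Q r -> Q r.
Proof.
  intros HP Hinv [Hneq [[Hr _] | [_ HQ]]]; [| exact HQ].
  exfalso; exact (pretangle_not_inv HP Hr Hneq Hinv).
Qed.

Section Subsequence.

Variables (s : nat -> osep V) (P : nat -> osep V -> Prop) (ord : nat -> nat).
Hypothesis ord_s : forall i, order_eq (s i) (ord i).
Hypothesis P_pt : forall i, pretangle adj (P i).
Hypotheses (HIM1 : IM1 s P) (HIM2 : IM2 s P).

Lemma ord_unbounded :
  cofinitely_exceeds s -> forall b, exists I, forall i, I <= i -> b < ord i.
Proof.
  intros Hcof b.
  destruct (Hcof (S b)) as [I HI].
  exists I; intros i Hi.
  destruct (HI i Hi) as [n [Hn Hbn]].
  rewrite <- (order_eq_unique Hn (ord_s i)); lia.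
Qed.

Lemma suffix_min_eff_distinguishes (i k : nat) :
  suffix_strict_min ord i -> i < k -> eff_distinguishes (P i) (P k) (s i).
Proof.
  intros Hmin Hik.
  apply HIM2; [lia |].
  intros l n n' Hl Hn Hn'.
  rewrite (order_eq_unique Hn (ord_s i)), (order_eq_unique Hn' (ord_s l)).
  destruct (Nat.eq_dec l i) as [-> | Hli]; [lia |].
  apply Nat.lt_le_incl, Hmin; lia.
Qed.

Lemma suffix_min_mem_later (i k : nat) :
  suffix_strict_min ord i -> i < k -> P k (s i).
Proof.
  intros Hmin Hik.
  apply (distinguishes_from_inv (P_pt i) (proj1 (HIM1 i))).
  exact (proj1 (suffix_min_eff_distinguishes Hmin Hik)).
Qed.

Variable j : nat -> nat.
Hypothesis j_incr : forall a b, a < b -> j a < j b.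
Hypothesis j_min : forall a, suffix_strict_min ord (j a).

Lemma IM1_subsequence : IM1 (fun a => s (j a)) (fun a => P (j a)).
Proof.
  intros a; split.
  - apply HIM1.
  - apply suffix_min_mem_later; auto.
Qed.

Lemma IM2_subsequence : IM2 (fun a => s (j a)) (fun a => P (j a)).
Proof.
  intros a b l Hl Hlmin.
  assert (l = a) as ->.
  { destruct (Nat.eq_dec l a) as [| Hla]; [easy | exfalso].
    specialize (Hlmin a (ord (j l)) (ord (j a)) ltac:(lia) (ord_s _) (ord_s _)).
    assert (ord (j a) < ord (j l)) by (apply j_min, j_incr; lia); lia. }
  apply suffix_min_eff_distinguishes; [apply j_min | apply j_incr; lia].
Qed.

End Subsequence.

End Separations.

Theorem mainTheorem16 (V : Type) (adj : V -> V -> Prop)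
  (adj_sym : forall x y, adj x y -> adj y x)
  (adj_irrefl : forall x, ~ adj x x)
  (s : nat -> osep V) (P : nat -> osep V -> Prop)
  (s_sep : forall i, is_sep adj (s i))
  (s_incr : forall i j, i < j -> olt (s i) (s j))
  (P_pt : forall i, pretangle adj (P i))
  (HIM1 : IM1 s P) (HIM2 : IM2 s P)
  (Hcof : cofinitely_exceeds s) :
  exists j : nat -> nat,
    (forall a b, a < b -> j a < j b) /\
    (forall a, exists n m, order_eq (s (j a)) n /\ order_eq (s (j (S a))) m /\ n < m) /\
    IM1 (fun a => s (j a)) (fun a => P (j a)) /\
    IM2 (fun a => s (j a)) (fun a => P (j a)).
Proof.
  destruct (choice (fun i n => order_eq (s i) n)) as [ord ord_s].
  { intros i; exact (pretangle_mem_order _ (P_pt (S i)) (proj2 (HIM1 i))). }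
  destruct (increasing_enumeration _ (suffix_strict_min_unbounded ord (ord_unbounded ord ord_s Hcof)))
    as [j [j_incr j_min]].
  exists j; split; [exact j_incr |]; split.
  - intros a; exists (ord (j a)), (ord (j (S a))).
    split; [| split]; [apply ord_s | apply ord_s | apply j_min, j_incr; lia].
  - split; [eapply IM1_subsequence | eapply IM2_subsequence]; eauto.
Qed.
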